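(* Let $\chi\in\chi(G)$ be a character, $\lambda\in\Lambda^\chi$ and $x\in X$. The following are equivalent: (1) $x\in S^\chi_\lambda$; (2) the function $v\mapsto\langle\chi,v\rangle/\|v\|$ on $\sigma_x\setminus\{0\}$ attains a negative relative minimum at $\lambda$; (3) $L(S_x)\subset S^\chi_\lambda$.
   Context: $G$ diagonalizable over $\mathbf C$ acting on $X=\mathbf A^n_{\mathbf C}$ by $g\cdot x=(\chi_1(g)x_1,\dots,\chi_n(g)x_n)$. $\chi(G)$ characters, $\Gamma(G)$ one-parameter subgroups, pairing $\chi(\lambda(t))=t^{\langle\chi,\lambda\rangle}$ extended to $\mathbf R$; fixed norm $\|\cdot\|$ on $\Gamma(G)$ from an inner product on $\Gamma(G)_{\mathbf R}$ integral on $\Gamma(G)$. $[n]=\{1,\dots,n\}$; $S_x=\{i:x_i\ne0\}$; $\sigma_x=\{v\in\Gamma(G)_{\mathbf R}:\langle\chi_i,v\rangle\ge0\ \forall i\in S_x\}$ (its lattice points are the $\lambda$ with $\lim_{t\to0}\lambda(t)x$ existing). $x$ is $\chi$-unstable if some $\lambda$ with existing limit has $\langle\chi,\lambda\rangle<0$; for unstable $x$, $\lambda_{\chi,x}$ is the unique indivisible one-parameter subgroup with existing limit minimizing $\langle\chi,\lambda\rangle/\|\lambda\|$ among nonzero such. $\Lambda^\chi=\{\lambda_{\chi,x}\}$, $S^\chi_\lambda=\{x\text{ unstable}:\lambda_{\chi,x}=\lambda\}$. For $S\subset[n]$, $L(S)=\{x:x_i\ne0\iff i\in S\}$. *)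

From mathcomp Require Import all_boot all_order all_algebra.
From mathcomp Require Import complex.
From mathcomp Require Import Rstruct.

Set Implicit Arguments.
Unset Strict Implicit.
Unset Printing Implicit Defensive.
Import Order.TTheory GRing.Theory Num.Theory.
Local Open Scope ring_scope.

(* Model:
   - Gamma(G) is identified with Z^r  (lattice  'I_r -> int),
     Gamma(G)_R with R^r               (vectors 'I_r -> R), R = Stdlib reals.
   - A character chi only enters through the linear form <chi, . > on Gamma(G),
     which is an element of Hom(Gamma(G), Z) = Z^r : we record it as 'I_r -> int.
   - The inner product on Gamma(G)_R is given by its Gram matrix Q (integral:
     integer entries; symmetric; positive definite).
   - X = A^n_C, points x : 'I_n -> C with C = R[i]. *)

Notation Real := Rdefinitions.R.
Notation Cplx := (complex Rdefinitions.R).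

Definition lattice (r : nat) := 'I_r -> int.
Definition rvec (r : nat) := 'I_r -> Real.
Definition charf (r : nat) := 'I_r -> int.

Definition embed r (l : lattice r) : rvec r := fun j => (l j)%:~R.

Definition pair r (c : charf r) (v : rvec r) : Real :=
  \sum_(j < r) (c j)%:~R * v j.

Definition ip r (Q : 'M[int]_r) (v w : rvec r) : Real :=
  \sum_(i < r) \sum_(j < r) v i * (Q i j)%:~R * w j.
Definition nrm r (Q : 'M[int]_r) (v : rvec r) : Real := Num.sqrt (ip Q v v).

Definition is_inner_product r (Q : 'M[int]_r) : Prop :=
  Q^T = Q /\ (forall v : rvec r, (exists j, v j != 0) -> 0 < ip Q v v).

Definition supp n (x : 'I_n -> Cplx) : {set 'I_n} := [set i | x i != 0].

Definition sigma n r (chis : 'I_n -> charf r) (x : 'I_n -> Cplx) (v : rvec r)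
  : Prop := forall i, i \in supp x -> 0 <= pair (chis i) v.

(* lim_{t->0} lambda(t) x exists  (characterization recalled in the context) *)
Definition lim_exists n r (chis : 'I_n -> charf r) (x : 'I_n -> Cplx)
  (l : lattice r) : Prop := sigma chis x (embed l).

Definition lat_nonzero r (l : lattice r) : Prop := exists j, l j != 0.

Definition indivisible r (l : lattice r) : Prop :=
  lat_nonzero l /\
  forall (k : int) (mu : lattice r), (1 < k) -> ~ (forall j, l j = k * mu j).

Definition ratio r (Q : 'M[int]_r) (c : charf r) (v : rvec r) : Real :=
  pair c v / nrm Q v.

Definition unstable n r (chis : 'I_n -> charf r) (c : charf r)
  (x : 'I_n -> Cplx) : Prop :=
  exists l : lattice r, lim_exists chis x l /\ pair c (embed l) < 0.

(* l = lambda_{chi,x}: l is the (unique, by the paper) indivisible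
   one-parameter subgroup with existing limit minimizing <chi,.>/||.||
   among the nonzero ones with existing limit. *)
Definition is_optimal n r (chis : 'I_n -> charf r) (Q : 'M[int]_r)
  (c : charf r) (x : 'I_n -> Cplx) (l : lattice r) : Prop :=
  indivisible l /\ lim_exists chis x l /\
  forall mu : lattice r, lat_nonzero mu -> lim_exists chis x mu ->
    ratio Q c (embed l) <= ratio Q c (embed mu).

Definition in_S n r (chis : 'I_n -> charf r) (Q : 'M[int]_r)
  (c : charf r) (l : lattice r) (x : 'I_n -> Cplx) : Prop :=
  unstable chis c x /\ is_optimal chis Q c x l.

Definition in_Lambda n r (chis : 'I_n -> charf r) (Q : 'M[int]_r)
  (c : charf r) (l : lattice r) : Prop :=
  exists x : 'I_n -> Cplx, in_S chis Q c l x.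

Definition in_L n (S : {set 'I_n}) (y : 'I_n -> Cplx) : Prop := supp y = S.

Definition neg_rel_min n r (chis : 'I_n -> charf r) (Q : 'M[int]_r)
  (c : charf r) (x : 'I_n -> Cplx) (v0 : rvec r) : Prop :=
  sigma chis x v0 /\ (exists j, v0 j != 0) /\ ratio Q c v0 < 0 /\
  exists eps : Real, 0 < eps /\
    forall v : rvec r, sigma chis x v -> (exists j, v j != 0) ->
      nrm Q (fun j => v j - v0 j) < eps -> ratio Q c v0 <= ratio Q c v.

(* On the cone sigma_x, for m <= 0 the set {v | <chi, v> < m ||v||} is convex,
   because v |-> <chi, v> - m ||v|| is convex.  Hence a negative relative minimum
   of <chi, .>/||.|| on sigma_x \ {0} is a global one, in particular a minimum over
   the one-parameter subgroups with existing limit: (2) implies (1).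
   Conversely sigma_x is a rational polyhedral cone, so its rational points are
   dense in it (the constraints tight at v cut out a rational subspace, the
   others stay strict nearby); since <chi, .>/||.|| is continuous and invariant
   under positive scaling, its minimum over lattice points is its minimum over
   sigma_x \ {0}: (1) implies (2).  Finally x is in S^chi_lambda iff every point
   of L(S_x) is, since membership only depends on S_x. *)

From Pilot Require Import Defs.
From mathcomp Require Import all_boot all_order all_algebra.
From mathcomp Require Import complex Rstruct ring lra.
From Stdlib Require Import FunctionalExtensionality.
Set Implicit Arguments.
Unset Strict Implicit.
Unset Printing Implicit Defensive.
Import Order.TTheory GRing.Theory Num.Theory.
Local Open Scope ring_scope.

Lemma rvec_eq0_or_neq0 r (v : rvec r) : (forall j, v j = 0) \/ exists j, v j != 0.
Proof.
case: (boolP [exists j, v j != 0]) => [/existsP|/existsPn v0]; first by right.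
by left => j; apply/eqP; rewrite -[_ == _]negbK v0.
Qed.

Section Pairing.
Variables (r : nat) (c : charf r).

Lemma pair_lin (u w : rvec r) (a b : Real) :
  pair c (fun j => a * u j + b * w j) = a * pair c u + b * pair c w.
Proof. by rewrite /pair !mulr_sumr -big_split; apply: eq_bigr => j _ /=; ring. Qed.

Lemma pairZ (u : rvec r) (a : Real) : pair c (fun j => a * u j) = a * pair c u.
Proof. by rewrite /pair mulr_sumr; apply: eq_bigr => j _; rewrite mulrCA. Qed.

Lemma pair_neq0 (u : rvec r) : pair c u != 0 -> exists j, u j != 0.
Proof.
case: (rvec_eq0_or_neq0 u) => // u0.
by rewrite /pair big1 ?eqxx // => j _; rewrite u0 mulr0.
Qed.

Lemma pair_dist_le (v w : rvec r) (d : Real) : (forall j, `|w j - v j| < d) ->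
  `|pair c w - pair c v| <= (\sum_j `|(c j)%:~R : Real|) * d.
Proof.
move=> near_wv; rewrite /pair -sumrB mulr_suml.
apply: le_trans (ler_norm_sum _ _ _) _; apply: ler_sum => j _.
by rewrite -mulrBr normrM ler_wpM2l // ltW.
Qed.

End Pairing.

Section InnerProduct.
Variables (r : nat) (Q : 'M[int]_r).
Hypothesis HQ : is_inner_product Q.

Lemma ip_linl (u w z : rvec r) (a b : Real) :
  ip Q (fun j => a * u j + b * w j) z = a * ip Q u z + b * ip Q w z.
Proof.
rewrite /ip !mulr_sumr -big_split; apply: eq_bigr => i _ /=.
by rewrite !mulr_sumr -big_split; apply: eq_bigr => j _ /=; ring.
Qed.

Lemma ipC (u w : rvec r) : ip Q u w = ip Q w u.
Proof.
rewrite /ip exchange_big; apply: eq_bigr => i _; apply: eq_bigr => j _.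
by rewrite -[in Q i j](proj1 HQ) mxE; ring.
Qed.

Lemma ip_quad (u w : rvec r) (a b : Real) :
  ip Q (fun j => a * u j + b * w j) (fun j => a * u j + b * w j) =
  a ^+ 2 * ip Q u u + 2 * a * b * ip Q u w + b ^+ 2 * ip Q w w.
Proof. by rewrite ip_linl [ip Q u _]ipC [ip Q w _]ipC !ip_linl [ip Q w u]ipC; ring. Qed.

Lemma ipZ (u : rvec r) (a : Real) :
  ip Q (fun j => a * u j) (fun j => a * u j) = a ^+ 2 * ip Q u u.
Proof.
rewrite /ip mulr_sumr; apply: eq_bigr => i _.
by rewrite mulr_sumr; apply: eq_bigr => j _; ring.
Qed.

Lemma ip0r (u w : rvec r) : (forall j, w j = 0) -> ip Q u w = 0.
Proof. by move=> w0; rewrite /ip big1 // => i _; rewrite big1 // => j _; rewrite w0 mulr0. Qed.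

Lemma ip_ge0 (v : rvec r) : 0 <= ip Q v v.
Proof. by case: (rvec_eq0_or_neq0 v) => [/ip0r -> //|/(proj2 HQ)/ltW]. Qed.

Lemma sqr_nrm (v : rvec r) : nrm Q v ^+ 2 = ip Q v v.
Proof. by rewrite sqr_sqrtr // ip_ge0. Qed.

Lemma nrm_ge0 (v : rvec r) : 0 <= nrm Q v.
Proof. exact: sqrtr_ge0. Qed.

Lemma nrm_gt0 (v : rvec r) : (exists j, v j != 0) -> 0 < nrm Q v.
Proof. by move=> v_neq0; rewrite sqrtr_gt0; apply: (proj2 HQ). Qed.

Lemma nrmZ (u : rvec r) (a : Real) : nrm Q (fun j => a * u j) = `|a| * nrm Q u.
Proof. by rewrite /nrm ipZ sqrtrM ?sqr_ge0 // sqrtr_sqr. Qed.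

Lemma cauchy_schwarz (u w : rvec r) : ip Q u w <= nrm Q u * nrm Q w.
Proof.
case: (rvec_eq0_or_neq0 w) => [/ip0r -> | w_neq0]; first by rewrite mulr_ge0 ?nrm_ge0.
set A := ip Q u u; set B := ip Q u w; set C := ip Q w w.
have C_gt0 : 0 < C by apply: (proj2 HQ).
have B2_le : B ^+ 2 <= A * C.
  have := ip_ge0 (fun j => C * u j + (- B) * w j); rewrite ip_quad -/A -/B -/C.
  have -> : C ^+ 2 * A + 2 * C * - B * B + (- B) ^+ 2 * C = C * (A * C - B ^+ 2) by ring.
  by rewrite pmulr_rge0 // subr_ge0.
apply: le_trans (ler_norm B) _.
by rewrite /nrm -sqrtrM ?ip_ge0 // -sqrtr_sqr ler_sqrt // mulr_ge0 ?ip_ge0.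
Qed.

Lemma nrm_convex (u w : rvec r) (a b : Real) : 0 <= a -> 0 <= b ->
  nrm Q (fun j => a * u j + b * w j) <= a * nrm Q u + b * nrm Q w.
Proof.
move=> a_ge0 b_ge0.
have rhs_ge0 : 0 <= a * nrm Q u + b * nrm Q w by rewrite addr_ge0 ?mulr_ge0 ?nrm_ge0.
rewrite {1}/nrm -(ger0_norm rhs_ge0) -sqrtr_sqr ler_sqrt ?sqr_ge0 // ip_quad -!sqr_nrm.
have := cauchy_schwarz u w; have : 0 <= 2 * a * b by rewrite !mulr_ge0.
nra.
Qed.

Lemma nrm_triangle (u w : rvec r) : nrm Q w <= nrm Q u + nrm Q (fun j => w j - u j).
Proof.
have -> : w = (fun j => 1 * u j + 1 * (w j - u j)).
  by apply: functional_extensionality => j; rewrite !mul1r addrC subrK.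
apply: le_trans (nrm_convex _ _ ler01 ler01) _; rewrite !mul1r.
rewrite (_ : (fun j => _) = (fun j => w j - u j)) //.
by apply: functional_extensionality => j; ring.
Qed.

Lemma nrm_le_entrywise (u : rvec r) (d : Real) : 0 < d -> (forall j, `|u j| < d) ->
  nrm Q u <= d * (\sum_i \sum_j `|(Q i j)%:~R : Real| + 1).
Proof.
move=> d_gt0 u_small; set T := \sum_i \sum_j `|(Q i j)%:~R : Real|.
have T_ge0 : 0 <= T by apply: sumr_ge0 => i _; apply: sumr_ge0.
have ip_le : ip Q u u <= d ^+ 2 * T.
  apply: le_trans (ler_norm _) _; rewrite /ip /T mulr_sumr.
  apply: le_trans (ler_norm_sum _ _ _) _; apply: ler_sum => i _; rewrite mulr_sumr.
  apply: le_trans (ler_norm_sum _ _ _) _; apply: ler_sum => j _.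
  rewrite !normrM mulrAC ler_wpM2r // expr2.
  by apply: ler_pM; rewrite ?normr_ge0 ?ltW.
have rhs_ge0 : 0 <= d * (T + 1) by apply: mulr_ge0; lra.
rewrite /nrm -(ger0_norm rhs_ge0) -sqrtr_sqr ler_sqrt ?sqr_ge0 //.
apply: le_trans ip_le _; rewrite exprMn ler_wpM2l ?sqr_ge0 //; nra.
Qed.

Lemma pair_lt_nrm_neq0 (c : charf r) (v : rvec r) (m : Real) :
  m <= 0 -> pair c v < m * nrm Q v -> exists j, v j != 0.
Proof.
move=> m_le0 v_lt; apply/pair_neq0/ltr0_neq0/(lt_le_trans v_lt).
by rewrite mulr_le0_ge0 ?nrm_ge0.
Qed.

Lemma ratio_lt (c : charf r) (v : rvec r) (m : Real) : (exists j, v j != 0) ->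
  (Defs.ratio Q c v < m) = (pair c v < m * nrm Q v).
Proof. by move=> /nrm_gt0 v_gt0; rewrite ltr_pdivrMr. Qed.

Lemma pair_ratio (c : charf r) (v : rvec r) : (exists j, v j != 0) ->
  pair c v = Defs.ratio Q c v * nrm Q v.
Proof. by move=> /nrm_gt0 v_gt0; rewrite divfK ?gt_eqF. Qed.

End InnerProduct.

Lemma sigma_conic n r (chis : 'I_n -> charf r) (x : 'I_n -> Cplx) (u w : rvec r) (a b : Real) :
  0 <= a -> 0 <= b -> sigma chis x u -> sigma chis x w ->
  sigma chis x (fun j => a * u j + b * w j).
Proof. by move=> a_ge0 b_ge0 su sw i ix; rewrite pair_lin addr_ge0 ?mulr_ge0 ?su ?sw. Qed.

Lemma pair_lt_nrm_segment r (Q : 'M[int]_r) (c : charf r) (u v : rvec r) (m t : Real) :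
  is_inner_product Q -> m <= 0 -> 0 < t <= 1 ->
  pair c u <= m * nrm Q u -> pair c v < m * nrm Q v ->
  pair c (fun j => (1 - t) * u j + t * v j) <
    m * nrm Q (fun j => (1 - t) * u j + t * v j).
Proof.
move=> HQ m_le0 /andP[t_gt0 t_le1] u_le v_lt; rewrite pair_lin.
apply: (@lt_le_trans _ _ (m * ((1 - t) * nrm Q u + t * nrm Q v))).
  have : (1 - t) * pair c u <= (1 - t) * (m * nrm Q u) by rewrite ler_wpM2l // subr_ge0.
  have : t * pair c v < t * (m * nrm Q v) by rewrite ltr_pM2l.
  lra.
by rewrite ler_wnM2l // nrm_convex // ?subr_ge0 // ltW.
Qed.

Lemma neg_rel_min_global n r (chis : 'I_n -> charf r) (Q : 'M[int]_r) (c : charf r)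
    (x : 'I_n -> Cplx) (v0 : rvec r) :
  is_inner_product Q -> neg_rel_min chis Q c x v0 ->
  forall v, sigma chis x v -> (exists j, v j != 0) ->
  Defs.ratio Q c v0 <= Defs.ratio Q c v.
Proof.
move=> HQ [s_v0 [v0_neq0 [m_lt0 [eps [eps_gt0 loc_min]]]]] v s_v v_neq0.
set m := Defs.ratio Q c v0 in m_lt0 loc_min *.
rewrite leNgt ratio_lt //; apply/negP => v_lt.
set d := nrm Q (fun j => v j - v0 j).
have d_ge0 : 0 <= d := nrm_ge0 _ _.
(* [t * d < eps]: the point of [v0, v] at parameter [t] is eps-close to [v0] *)
set t := eps / (eps + d + 1).
have t_gt0 : 0 < t by rewrite divr_gt0 //; lra.
have t_in : 0 < t <= 1 by rewrite t_gt0 ler_pdivrMr ?mul1r; lra.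
have v0_le : pair c v0 <= m * nrm Q v0 by rewrite (pair_ratio HQ).
have := pair_lt_nrm_segment HQ (ltW m_lt0) t_in v0_le v_lt.
set w := fun j => _ => w_lt.
have w_neq0 := pair_lt_nrm_neq0 (ltW m_lt0) w_lt.
have w_near : nrm Q (fun j => w j - v0 j) < eps.
  have -> : (fun j => w j - v0 j) = (fun j => t * (v j - v0 j)).
    by apply: functional_extensionality => j; rewrite /w; ring.
  by rewrite nrmZ gtr0_norm // -/d /t mulrAC ltr_pdivrMr ?ltr_pM2l //; lra.
have s_w : sigma chis x w by apply: sigma_conic; rewrite // ?subr_ge0; lra.
by have := loc_min w s_w w_neq0 w_near; rewrite leNgt (ratio_lt HQ c m w_neq0) w_lt.
Qed.

Definition locally r (v : rvec r) (P : rvec r -> Prop) : Prop :=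
  exists2 d : Real, 0 < d & forall w : rvec r, (forall j, `|w j - v j| < d) -> P w.

Lemma locallyT r (v : rvec r) (P : rvec r -> Prop) : (forall w, P w) -> locally v P.
Proof. by move=> P_all; exists 1. Qed.

Lemma locally_and r (v : rvec r) (P1 P2 : rvec r -> Prop) :
  locally v P1 -> locally v P2 -> locally v (fun w => P1 w /\ P2 w).
Proof.
move=> [d1 d1_gt0 H1] [d2 d2_gt0 H2]; exists (Num.min d1 d2); first by rewrite lt_min d1_gt0.
move=> w near_w.
have near_wj j : `|w j - v j| < d1 /\ `|w j - v j| < d2 by apply/andP; rewrite -lt_min.
by split; [apply: H1 | apply: H2] => j; case: (near_wj j).
Qed.

Lemma locally_forall (I : finType) r (v : rvec r) (P : I -> rvec r -> Prop) :
  (forall i, locally v (P i)) -> locally v (fun w => forall i, P i w).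
Proof.
move=> locP.
suff [d d_gt0 Hd] : locally v (fun w => forall i, i \in enum I -> P i w).
  by exists d => // w /Hd P_w i; apply: P_w; rewrite mem_enum.
elim: (enum I) => [|i s IHs]; first exact: locallyT.
have [d d_gt0 Hd] := locally_and (locP i) IHs.
exists d => // w /Hd[P_iw P_sw] k; rewrite in_cons => /predU1P[-> // | ks].
exact: P_sw.
Qed.

Lemma locally_pair_gt0 r (c : charf r) (v : rvec r) :
  0 < pair c v -> locally v (fun w => 0 < pair c w).
Proof.
move=> pv_gt0; pose C : Real := \sum_j `|(c j)%:~R : Real|.
have C_ge0 : 0 <= C by apply: sumr_ge0.
exists (pair c v / (C + 1)) => [|w /(pair_dist_le c)]; first by rewrite divr_gt0 //; lra.
have : C * (pair c v / (C + 1)) < pair c v by rewrite mulrA ltr_pdivrMr; nra.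
by rewrite -/C ler_norml; lra.
Qed.

Lemma locally_pair_lt_nrm r (Q : 'M[int]_r) (c : charf r) (v : rvec r) (m : Real) :
  is_inner_product Q -> m <= 0 -> pair c v < m * nrm Q v ->
  locally v (fun w => pair c w < m * nrm Q w).
Proof.
move=> HQ m_le0 v_lt.
pose C : Real := \sum_j `|(c j)%:~R : Real|.
pose T : Real := \sum_i \sum_j `|(Q i j)%:~R : Real|.
have C_ge0 : 0 <= C by apply: sumr_ge0.
have T_ge0 : 0 <= T by apply: sumr_ge0 => i _; apply: sumr_ge0.
pose g := m * nrm Q v - pair c v; pose K := C - m * (T + 1).
have K_ge0 : 0 <= K by rewrite /K; nra.
have g_gt0 : 0 < g by rewrite /g; lra.
set d := g / (K + 1).
have d_gt0 : 0 < d by rewrite divr_gt0 //; lra.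
exists d => // w near_w.
(* near [v], [pair c] grows by at most [C * d] and [m * nrm Q] drops by at most
   [- m * (T + 1) * d]; together [K * d] stay below the slack [g] *)
have dK : d * (K + 1) = g by rewrite divfK // gt_eqF //; lra.
have := pair_dist_le c near_w; rewrite -/C ler_norml => /andP[_ pw_le].
have nrm_wv := nrm_le_entrywise Q d_gt0 near_w; rewrite -/T in nrm_wv.
have nrm_w := nrm_triangle HQ v w.
have : m * (nrm Q v + d * (T + 1)) <= m * nrm Q w by rewrite ler_wnM2l //; lra.
rewrite /K /g in dK; lra.
Qed.

Lemma ratr_approx (R : archiRealFieldType) (y eta : R) :
  0 < eta -> exists q : rat, `|ratr q - y| < eta.
Proof.
move=> eta_gt0; pose N := Num.bound eta^-1.
have N_gt : eta^-1 < N%:R by apply: archi_boundP; rewrite invr_ge0 ltW.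
have N_gt0 : (0 : R) < N%:R by apply: lt_trans N_gt; rewrite invr_gt0.
have etaN_gt1 : 1 < eta * N%:R by rewrite -[X in X < _](mulfV (lt0r_neq0 eta_gt0)) ltr_pM2l.
pose f := Num.floor (y * N%:R).
exists (f%:~R / N%:R); rewrite fmorph_div rmorph_int rmorph_nat.
have -> : f%:~R / N%:R - y = (f%:~R - y * N%:R) / N%:R by field; rewrite gt_eqF.
rewrite normrM [`|_^-1|]gtr0_norm ?invr_gt0 // ltr_pdivrMr //.
have := floor_le (y * N%:R); have := floorD1_gt (y * N%:R).
rewrite -/f intrD ltr_norml; lra.
Qed.

Lemma kermx_ratr_dense (R : archiRealFieldType) m k (A : 'M[rat]_(m, k))
    (v : 'rV[R]_m) (d : R) :
  v *m map_mx ratr A = 0 -> 0 < d ->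
  exists2 q : 'rV[rat]_m, q *m A = 0 & forall j, `|ratr (q 0 j) - v 0 j| < d.
Proof.
move=> vA0 d_gt0.
have : (v <= kermx (map_mx ratr A))%MS by rewrite sub_kermx vA0.
rewrite -map_kermx => /submxP[a ->].
have := mulmx_ker A; move: (kermx A) => K KA0.
pose M : R := \sum_j \sum_i `|ratr (K i j)|.
have M_ge0 : 0 <= M by apply: sumr_ge0 => j _; apply: sumr_ge0.
pose eta := d / (M + 1).
have eta_gt0 : 0 < eta by rewrite divr_gt0 //; lra.
have /fin_all_exists[b b_near] : forall i, exists b : rat, `|ratr b - a 0 i| < eta.
  by move=> i; apply: ratr_approx.
exists (\row_i b i *m K) => [|j]; first by rewrite -mulmxA KA0 mulmx0.
rewrite !mxE rmorph_sum -sumrB.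
apply: le_lt_trans (ler_norm_sum _ _ _) _.
apply: (@le_lt_trans _ _ (eta * \sum_i `|ratr (K i j)|)).
  rewrite mulr_sumr; apply: ler_sum => i _.
  by rewrite !mxE rmorphM -mulrBl normrM; apply: ler_wpM2r; [exact: normr_ge0 | exact/ltW/b_near].
apply: (@le_lt_trans _ _ (eta * M)).
  apply: ler_wpM2l; first exact: ltW.
  rewrite /M [leRHS](bigD1 j) //= lerDl.
  by apply: sumr_ge0 => j' _; apply: sumr_ge0.
by rewrite /eta mulrAC ltr_pdivrMr ?ltr_pM2l //; lra.
Qed.

Lemma pair_ratr r (c : charf r) (q : 'I_r -> rat) :
  pair c (fun j => ratr (q j)) = ratr (\sum_j (c j)%:~R * q j).
Proof. by rewrite /pair rmorph_sum; apply: eq_bigr => j _; rewrite rmorphM rmorph_int. Qed.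

Lemma sigma_rat_dense n r (chis : 'I_n -> charf r) (x : 'I_n -> Cplx) (v : rvec r)
    (P : rvec r -> Prop) :
  sigma chis x v -> locally v P ->
  exists q : 'I_r -> rat, sigma chis x (fun j => ratr (q j)) /\ P (fun j => ratr (q j)).
Proof.
move=> s_v locP.
have [d d_gt0 near_d] : locally v (fun w => P w /\ forall i,
    (i \in supp x) && (pair (chis i) v != 0) -> 0 < pair (chis i) w).
  apply: locally_and locP (locally_forall _) => i.
  case: (boolP ((i \in supp x) && _)) => [/andP[ix pv_neq0] | _]; last exact: locallyT.
  have pv_gt0 : 0 < pair (chis i) v by rewrite lt_def pv_neq0 s_v.
  by have [e e_gt0 He] := locally_pair_gt0 pv_gt0; exists e => // w /He.
(* the constraints that are tight at [v] are kept exactly, on a rational subspace *)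
pose A : 'M[rat]_(r, n) :=
  \matrix_(j, i) if pair (chis i) v == 0 then (chis i j)%:~R else 0.
have vA0 : \row_j v j *m map_mx ratr A = 0.
  apply/rowP => i; rewrite !mxE; under eq_bigr do rewrite !mxE.
  case: eqP => [pv0 | _]; last by rewrite big1 // => j _; rewrite rmorph0 mulr0.
  by rewrite -[RHS]pv0 /pair; apply: eq_bigr => j _; rewrite rmorph_int mulrC.
have [q qA0 q_near] := kermx_ratr_dense vA0 d_gt0.
have near_q j : `|ratr (q 0 j) - v j| < d by have := q_near j; rewrite mxE.
have [Pq slack_q] := near_d _ near_q.
exists (fun j => q 0 j); split => // i ix.
have [pv0 | pv_neq0] := eqVneq (pair (chis i) v) 0; last by apply/ltW/slack_q; rewrite ix.
have qA_i : \sum_j (chis i j)%:~R * q 0 j = (q *m A) 0 i.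
  by rewrite mxE; apply: eq_bigr => j _; rewrite mxE pv0 eqxx mulrC.
by rewrite pair_ratr qA_i qA0 mxE rmorph0.
Qed.

Lemma rat_lattice_multiple r (q : 'I_r -> rat) :
  exists2 D : int, 0 < D & exists mu : lattice r, forall j, embed mu j = D%:~R * ratr (q j).
Proof.
pose D : int := \prod_j denq (q j).
exists D; first by apply: prodr_gt0 => j _; apply: denq_gt0.
exists (fun j => numq (q j) * \prod_(k | k != j) denq (q k)) => j.
have intr_prod (P : pred 'I_r) (F : 'I_r -> int) :
    ((\prod_(k | P k) F k)%:~R : rat) = \prod_(k | P k) (F k)%:~R.
  exact: (big_morph _ (@intrM rat)).
have mu_j : ((numq (q j) * \prod_(k | k != j) denq (q k))%:~R : rat) = D%:~R * q j.
  by rewrite intrM numqE /D [in RHS](bigD1 j) //= intrM !intr_prod; ring.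
by rewrite /embed -[LHS]ratr_int mu_j rmorphM rmorph_int.
Qed.

Lemma lat_nonzero_embed r (l : lattice r) : lat_nonzero l <-> exists j, embed l j != 0.
Proof. by split=> -[j j_neq0]; exists j; rewrite /embed intr_eq0 in j_neq0 *. Qed.

Lemma optimal_ratio_le n r (chis : 'I_n -> charf r) (Q : 'M[int]_r) (c : charf r)
    (x : 'I_n -> Cplx) (l : lattice r) :
  is_inner_product Q -> is_optimal chis Q c x l -> Defs.ratio Q c (embed l) <= 0 ->
  forall v, sigma chis x v -> (exists j, v j != 0) ->
  Defs.ratio Q c (embed l) <= Defs.ratio Q c v.
Proof.
move=> HQ [_ [_ l_min]] m_le0 v s_v v_neq0.
set m := Defs.ratio Q c (embed l) in m_le0 l_min *.
rewrite leNgt (ratio_lt HQ c m v_neq0); apply/negP => v_lt.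
have [q [s_q q_lt]] := sigma_rat_dense s_v (locally_pair_lt_nrm HQ m_le0 v_lt).
have [D D_gt0 [mu mu_eq]] := rat_lattice_multiple q.
have D_gt0' : (0 : Real) < D%:~R by rewrite ltr0z.
have embed_mu : embed mu = fun j => D%:~R * ratr (q j).
  exact: functional_extensionality.
have mu_lt : pair c (embed mu) < m * nrm Q (embed mu).
  by rewrite embed_mu pairZ nrmZ gtr0_norm // mulrCA ltr_pM2l.
have mu_neq0 := pair_lt_nrm_neq0 m_le0 mu_lt.
have lat_mu : lat_nonzero mu by apply/lat_nonzero_embed.
have lim_mu : lim_exists chis x mu.
  by move=> i ix; rewrite embed_mu pairZ mulr_ge0 ?(ltW D_gt0') ?s_q.
by have := l_min mu lat_mu lim_mu; rewrite leNgt (ratio_lt HQ c m mu_neq0) mu_lt.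
Qed.

Lemma in_S_supp n r (chis : 'I_n -> charf r) (Q : 'M[int]_r) (c : charf r)
    (l : lattice r) (x y : 'I_n -> Cplx) :
  supp y = supp x -> in_S chis Q c l y <-> in_S chis Q c l x.
Proof. by move=> supp_yx; rewrite /in_S /unstable /is_optimal /lim_exists /sigma supp_yx. Qed.

Section Equivalence.
Variables (n r : nat) (chis : 'I_n -> charf r) (Q : 'M[int]_r) (c : charf r).
Variables (l : lattice r) (x : 'I_n -> Cplx).
Hypothesis HQ : is_inner_product Q.

Lemma in_S_neg_rel_min : in_S chis Q c l x -> neg_rel_min chis Q c x (embed l).
Proof.
move=> [[mu [lim_mu mu_lt0]] l_opt]; have [[l_neq0 _] [lim_l l_min]] := l_opt.
have mu_neq0 := pair_neq0 (ltr0_neq0 mu_lt0).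
have lat_mu := proj2 (lat_nonzero_embed mu) mu_neq0.
have l_lt0 : Defs.ratio Q c (embed l) < 0.
  by apply: le_lt_trans (l_min mu lat_mu lim_mu) _; rewrite (ratio_lt HQ c 0 mu_neq0) mul0r.
split; [exact: lim_l | split; [exact: (proj1 (lat_nonzero_embed l) l_neq0) | split => //]].
by exists 1; split => // v s_v v_neq0 _; apply: optimal_ratio_le (ltW l_lt0) v s_v v_neq0.
Qed.

Lemma neg_rel_min_in_S : indivisible l ->
  neg_rel_min chis Q c x (embed l) -> in_S chis Q c l x.
Proof.
move=> l_ind l_min; have [s_l [l_neq0 [l_lt0 _]]] := l_min.
split; first by exists l; split; rewrite // -(mul0r (nrm Q (embed l))) -(ratio_lt HQ c 0 l_neq0).
split=> //; split=> // mu mu_neq0 lim_mu.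
exact: neg_rel_min_global HQ l_min _ lim_mu (proj1 (lat_nonzero_embed _) mu_neq0).
Qed.

End Equivalence.

Theorem proposition3p13 (n r : nat) (chis : 'I_n -> charf r) (Q : 'M[int]_r)
  (HQ : is_inner_product Q) (c : charf r) (l : lattice r)
  (Hl : in_Lambda chis Q c l) (x : 'I_n -> Cplx) :
  (in_S chis Q c l x <-> neg_rel_min chis Q c x (embed l)) /\
  (neg_rel_min chis Q c x (embed l) <->
     (forall y : 'I_n -> Cplx, in_L (supp x) y -> in_S chis Q c l y)).
Proof.
have l_ind : indivisible l by case: Hl => y [_ []].
have S_iff y : in_S chis Q c l y <-> neg_rel_min chis Q c y (embed l).
  by split; [exact: in_S_neg_rel_min | exact: neg_rel_min_in_S].
split=> //; split=> [l_min y supp_y | in_S_L]; last exact/S_iff/in_S_L.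
exact/(in_S_supp _ _ _ _ supp_y)/S_iff.
Qed.
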